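(* Let $R$ be a ring and let $A$ be an $(R,R)$-bimodule which is also a (not necessarily unital) associative ring such that $(aw)r=a(wr)$, $(ar)w=a(rw)$ and $(ra)w=r(aw)$ for all $a,w\in A$, $r\in R$. Suppose that for every $a\in A$ there exists $w\in A$ with $a+w+aw=0$. Let $S=I(R;A)$ be the Dorroh (ideal) extension, i.e. the additive group $R\oplus A$ with multiplication $(r,a)(s,w)=(rs,\,rw+as+aw)$. Then $R$ is NJ-symmetric if and only if $S$ is NJ-symmetric.
   Context: Rings are associative; $R$ has identity. $N(T)$ is the set of nilpotent elements, $J(T)$ the Jacobson radical of a ring $T$. $T$ is NJ-symmetric if for all $a,b,c\in T$, $abc\in N(T)$ implies $bac\in J(T)$. *)

From HB Require Import structures.
From mathcomp Require Import all_boot all_order all_algebra ssrAC.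
Set Implicit Arguments. Unset Strict Implicit. Unset Printing Implicit Defensive.
Import GRing.Theory.
Local Open Scope ring_scope.

Definition nilp (T : pzRingType) (x : T) : Prop := exists n : nat, x ^+ n = 0.

Definition left_ideal (T : pzRingType) (I : T -> Prop) : Prop :=
  [/\ I 0, (forall x y, I x -> I y -> I (x - y)) & (forall r x, I x -> I (r * x))].

Definition maximal_left_ideal (T : pzRingType) (M : T -> Prop) : Prop :=
  [/\ left_ideal M, ~ M 1 &
      forall I : T -> Prop, left_ideal I -> (forall x, M x -> I x) -> ~ I 1 ->
        forall x, I x -> M x].

Definition jacobson (T : pzRingType) (x : T) : Prop :=
  forall M : T -> Prop, maximal_left_ideal M -> M x.

Definition NJ_symmetric (T : pzRingType) : Prop :=
  forall a b c : T, nilp (a * b * c) -> jacobson (b * a * c).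

Record bimodRing (R : pzRingType) := BimodRing {
  bm_sort :> zmodType;
  bm_mul : bm_sort -> bm_sort -> bm_sort;
  bm_lact : R -> bm_sort -> bm_sort;
  bm_ract : bm_sort -> R -> bm_sort;
  bm_mulA : forall a b c, bm_mul a (bm_mul b c) = bm_mul (bm_mul a b) c;
  bm_mulDl : forall a b c, bm_mul (a + b) c = bm_mul a c + bm_mul b c;
  bm_mulDr : forall a b c, bm_mul a (b + c) = bm_mul a b + bm_mul a c;
  bm_lactDr : forall r a b, bm_lact r (a + b) = bm_lact r a + bm_lact r b;
  bm_lactDl : forall r s a, bm_lact (r + s) a = bm_lact r a + bm_lact s a;
  bm_lactA : forall r s a, bm_lact (r * s) a = bm_lact r (bm_lact s a);
  bm_lact1 : forall a, bm_lact 1 a = a;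
  bm_ractDl : forall a b r, bm_ract (a + b) r = bm_ract a r + bm_ract b r;
  bm_ractDr : forall a r s, bm_ract a (r + s) = bm_ract a r + bm_ract a s;
  bm_ractA : forall a r s, bm_ract a (r * s) = bm_ract (bm_ract a r) s;
  bm_ract1 : forall a, bm_ract a 1 = a;
  bm_lract : forall r a s, bm_ract (bm_lact r a) s = bm_lact r (bm_ract a s);
  bm_mul_ract : forall a w r, bm_ract (bm_mul a w) r = bm_mul a (bm_ract w r);
  bm_ract_mul : forall a r w, bm_mul (bm_ract a r) w = bm_mul a (bm_lact r w);
  bm_lact_mul : forall r a w, bm_mul (bm_lact r a) w = bm_lact r (bm_mul a w)
}.

Section Dorroh.
Variables (R : pzRingType) (A : bimodRing R).

Definition dorroh : Type := (R * A)%type.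
HB.instance Definition _ := GRing.Zmodule.on dorroh.

Definition dorroh_one : dorroh := (1, 0).
Definition dorroh_mul (x y : dorroh) : dorroh :=
  (x.1 * y.1, bm_lact x.1 y.2 + bm_ract x.2 y.1 + bm_mul x.2 y.2).

Lemma bm_lact0 (r : R) : bm_lact r (0 : A) = 0.
Proof. by apply: (addrI (bm_lact r 0)); rewrite -bm_lactDr !addr0. Qed.
Lemma bm_act0l (a : A) : bm_lact 0 a = 0.
Proof. by apply: (addrI (bm_lact 0 a)); rewrite -bm_lactDl !addr0. Qed.
Lemma bm_ract0 (a : A) : bm_ract a 0 = 0.
Proof. by apply: (addrI (bm_ract a 0)); rewrite -bm_ractDr !addr0. Qed.
Lemma bm_ract0l r : bm_ract (0 : A) r = 0.
Proof. by apply: (addrI (bm_ract 0 r)); rewrite -bm_ractDl !addr0. Qed.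
Lemma bm_mul0r (a : A) : bm_mul (0 : A) a = 0.
Proof. by apply: (addrI (bm_mul 0 a)); rewrite -bm_mulDl !addr0. Qed.
Lemma bm_mulr0 (a : A) : bm_mul a (0 : A) = 0.
Proof. by apply: (addrI (bm_mul a 0)); rewrite -bm_mulDr !addr0. Qed.

Lemma dorroh_mulA : associative dorroh_mul.
Proof.
move=> [r a] [s w] [t v]; rewrite /dorroh_mul /=; congr pair; first exact: mulrA.
rewrite !bm_lactDr !bm_ractDl !bm_mulDl !bm_mulDr !bm_lactA !bm_ractA.
rewrite !bm_lract !bm_mul_ract !bm_ract_mul !bm_lact_mul !bm_mulA.
by rewrite (AC (4*3) ((1*(2*4*6))*(3*5*7))).
Qed.

Lemma dorroh_mul1r : left_id dorroh_one dorroh_mul.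
Proof.
by move=> [s w]; rewrite /dorroh_mul /=; rewrite mul1r bm_lact1 bm_ract0l bm_mul0r !addr0.
Qed.

Lemma dorroh_mulr1 : right_id dorroh_one dorroh_mul.
Proof.
by move=> [s w]; rewrite /dorroh_mul /=; rewrite mulr1 bm_ract1 bm_lact0 bm_mulr0 add0r addr0.
Qed.

Lemma dorroh_mulDl : left_distributive dorroh_mul +%R.
Proof.
move=> [r a] [s w] [t v]; rewrite /dorroh_mul /=; congr pair; first exact: mulrDl.
rewrite bm_lactDl bm_ractDl bm_mulDl.
by rewrite (AC (3*3) ((1*4)*(2*5)*(3*6))).
Qed.

Lemma dorroh_mulDr : right_distributive dorroh_mul +%R.
Proof.
move=> [r a] [s w] [t v]; rewrite /dorroh_mul /=; congr pair; first exact: mulrDr.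
rewrite bm_lactDr bm_ractDr bm_mulDr.
by rewrite (AC (3*3) ((1*4)*(2*5)*(3*6))).
Qed.

HB.instance Definition _ := GRing.Zmodule_isPzRing.Build dorroh
  dorroh_mulA dorroh_mul1r dorroh_mulr1 dorroh_mulDl dorroh_mulDr.

End Dorroh.

From Pilot Require Import Defs.
From HB Require Import structures.
From mathcomp Require Import all_boot all_order all_algebra ssrAC.
From Stdlib Require Import Classical.
Import GRing.Theory.
Set Implicit Arguments. Unset Strict Implicit. Unset Printing Implicit Defensive.
Local Open Scope ring_scope.

(* The first projection [S = I(R;A) -> R] is a ring surjection, split by
   [r |-> (r, 0)], with kernel [0 (+) A].  Quasi-regularity of [A] makes every
   [1 - (0, b)] left invertible in [S], so the kernel lies in every maximal left
   ideal of [S]; maximal left ideals of [S] are then exactly the preimages of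
   those of [R], i.e. [x \in J(S)] iff [x.1 \in J(R)].  As both ring maps preserve
   nilpotency, NJ-symmetry transfers in both directions. *)

Section LeftIdeals.
Variables (T : pzRingType) (I : T -> Prop).
Hypothesis idI : left_ideal I.

Lemma left_ideal0 : I 0.
Proof. by case: idI. Qed.

Lemma left_idealN x : I x -> I (- x).
Proof. by case: idI => I0 IB _ Ix; rewrite -sub0r; apply: IB. Qed.

Lemma left_idealD x y : I x -> I y -> I (x + y).
Proof. by case: idI => _ IB _ Ix Iy; rewrite -[y]opprK; apply/IB/left_idealN. Qed.

Lemma left_idealB x y : I x -> I y -> I (x - y).
Proof. by case: idI => _ IB _; apply: IB. Qed.

Lemma left_idealMl r x : I x -> I (r * x).
Proof. by case: idI => _ _; apply. Qed.

End LeftIdeals.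

Lemma left_ideal_preim (S T : pzRingType) (f : {rmorphism S -> T}) (I : T -> Prop) :
  left_ideal I -> left_ideal (fun x => I (f x)).
Proof.
case=> I0 IB IM; split=> [|x y Ix Iy|r x Ix]; first by rewrite rmorph0.
- by rewrite rmorphB; apply: IB.
- by rewrite rmorphM; apply: IM.
Qed.

Lemma nilp_rmorph (S T : pzRingType) (f : {rmorphism S -> T}) (x : S) :
  Defs.nilp x -> Defs.nilp (f x).
Proof. by case=> n xn0; exists n; rewrite -rmorphXn xn0 rmorph0. Qed.

(* [M + T x] is a left ideal strictly above [M], hence all of [T]. *)
Lemma maximal_left_ideal_comax (T : pzRingType) (M : T -> Prop) (x : T) :
  maximal_left_ideal M -> ~ M x -> exists m s, M m /\ m + s * x = 1.
Proof.
case=> idM _ maxM Mx; apply: NNPP => no_comax.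
pose I y := exists m s, M m /\ y = m + s * x.
have idI : left_ideal I.
  split=> [|y z [m [s [Mm ->]]] [m' [s' [Mm' ->]]]|r y [m [s [Mm ->]]]].
  - by exists 0, 0; rewrite mul0r addr0; split; first exact: left_ideal0.
  - exists (m - m'), (s - s'); split; first exact: left_idealB.
    by rewrite mulrBl opprD addrACA.
  - by exists (r * m), (r * s); rewrite mulrDr mulrA; split; first exact: left_idealMl.
have MI y : M y -> I y by exists y, 0; rewrite mul0r addr0.
have I1 : ~ I 1 by case=> m [s [Mm e]]; apply: no_comax; exists m, s.
by apply/Mx/(maxM I idI MI I1); exists 0, 1; rewrite mul1r add0r; split; first exact: left_ideal0.
Qed.

Lemma jacobson_left_quasi_regular (T : pzRingType) (x : T) :
  (forall s, exists u, u * (1 - s * x) = 1) -> jacobson x.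
Proof.
move=> qrx M maxM; apply: NNPP => Mx.
have [m [s [Mm msx1]]] := maximal_left_ideal_comax maxM Mx.
have [u usx1] := qrx s.
case: maxM => idM M1 _; apply: M1.
by rewrite -usx1 -msx1 addrK; apply: left_idealMl.
Qed.

Section SplitSurjection.
Variables (S T : pzRingType) (f : {rmorphism S -> T}) (g : {rmorphism T -> S}).
Hypothesis gK : cancel g f.

Lemma sub_section_kernel x : f (x - g (f x)) = 0.
Proof. by rewrite rmorphB gK subrr. Qed.

Lemma maximal_left_ideal_preim (M : T -> Prop) :
  maximal_left_ideal M -> maximal_left_ideal (fun x => M (f x)).
Proof.
case=> idM M1 maxM; split; [exact: left_ideal_preim | by rewrite rmorph1 |].
move=> I idI MI I1 x Ix.
pose J t := I (g t).
have idJ : left_ideal J by apply: left_ideal_preim.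
have MJ t : M t -> J t by move=> Mt; apply: MI; rewrite gK.
have J1 : ~ J 1 by rewrite /J rmorph1.
apply: (maxM J idJ MJ J1); rewrite /J.
have Iker : I (x - g (f x)).
  by apply: MI; rewrite sub_section_kernel; apply: left_ideal0.
by rewrite -[g _](subKr x); apply: left_idealB.
Qed.

Lemma maximal_left_ideal_section (M : S -> Prop) :
  maximal_left_ideal M -> (forall x, f x = 0 -> M x) ->
  maximal_left_ideal (fun t => M (g t)).
Proof.
move=> [idM M1 maxM] Mker; split; [exact: left_ideal_preim | by rewrite rmorph1 |].
move=> I idI MI I1 t It.
have MgfM x : M x -> M (g (f x)).
  move=> Mx; rewrite -[g _](subKr x).
  by apply: left_idealB => //; apply: Mker; apply: sub_section_kernel.
have idIf : left_ideal (fun x => I (f x)) by apply: left_ideal_preim.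
have MIf x : M x -> I (f x) by move=> /MgfM Mgfx; apply: MI.
have I1f : ~ I (f 1) by rewrite rmorph1.
by apply: (maxM _ idIf MIf I1f); rewrite gK.
Qed.

Lemma jacobson_rmorph x : jacobson x -> jacobson (f x).
Proof. by move=> Jx M /maximal_left_ideal_preim /Jx. Qed.

Hypothesis ker_jacobson : forall x, f x = 0 -> jacobson x.

Lemma jacobson_rmorphE x : jacobson (f x) <-> jacobson x.
Proof.
split=> [Jfx M maxM|]; last exact: jacobson_rmorph.
have [idM _ _] := maxM.
have Mker y : f y = 0 -> M y by move=> /ker_jacobson; apply.
have Mgfx := Jfx _ (maximal_left_ideal_section maxM Mker).
rewrite -[x](subrK (g (f x))); apply: left_idealD => //.
by apply: Mker; apply: sub_section_kernel.
Qed.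

Lemma NJ_symmetric_split : NJ_symmetric T <-> NJ_symmetric S.
Proof.
split=> [NJT a b c /(nilp_rmorph f) | NJS a b c /(nilp_rmorph g)].
- by rewrite !rmorphM -jacobson_rmorphE !rmorphM; apply: NJT.
- by rewrite !rmorphM => /NJS; rewrite -jacobson_rmorphE !rmorphM !gK.
Qed.

End SplitSurjection.

Section DorrohExtension.
Variables (R : pzRingType) (A : bimodRing R).

Definition bm_circ (a w : A) : A := a + w + bm_mul a w.

Lemma bm_circA : associative bm_circ.
Proof.
move=> a b c; rewrite /bm_circ !bm_mulDr !bm_mulDl bm_mulA.
by rewrite (AC ((1*3)*3) ((1*2*5*3)*(6*4*7))).
Qed.

Lemma bm_circ0r : right_id 0 bm_circ.
Proof. by move=> a; rewrite /bm_circ bm_mulr0 !addr0. Qed.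

Lemma bm_circ0l : left_id 0 bm_circ.
Proof. by move=> a; rewrite /bm_circ bm_mul0r add0r addr0. Qed.

Definition dorroh_fst (x : dorroh A) : R := x.1.
Definition dorroh_inj (r : R) : dorroh A := (r, 0).

Fact dorroh_fst_is_zmod_morphism : zmod_morphism dorroh_fst. Proof. by []. Qed.
Fact dorroh_fst_is_monoid_morphism : monoid_morphism dorroh_fst. Proof. by []. Qed.
HB.instance Definition _ := GRing.isZmodMorphism.Build _ _ dorroh_fst
  dorroh_fst_is_zmod_morphism.
HB.instance Definition _ := GRing.isMonoidMorphism.Build _ _ dorroh_fst
  dorroh_fst_is_monoid_morphism.

Fact dorroh_inj_is_zmod_morphism : zmod_morphism dorroh_inj.
Proof. by move=> r s; rewrite /dorroh_inj; congr pair; rewrite /= subrr. Qed.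
Fact dorroh_inj_is_monoid_morphism : monoid_morphism dorroh_inj.
Proof.
split=> // r s; rewrite /dorroh_inj; congr pair.
by rewrite /= bm_lact0 bm_ract0l bm_mul0r !addr0.
Qed.
HB.instance Definition _ := GRing.isZmodMorphism.Build _ _ dorroh_inj
  dorroh_inj_is_zmod_morphism.
HB.instance Definition _ := GRing.isMonoidMorphism.Build _ _ dorroh_inj
  dorroh_inj_is_monoid_morphism.

Lemma dorroh_injK : cancel dorroh_inj dorroh_fst. Proof. by []. Qed.

Hypothesis qrA : forall a, exists w, bm_circ a w = 0.

(* A right inverse [w] of [a] for the circle monoid has itself a right inverse [v];
   then [a = a o (w o v) = (a o w) o v = v], so [w] is also a left inverse of [a]. *)
Lemma bm_circ_left_inverse a : exists c, bm_circ c a = 0.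
Proof.
have [w aw0] := qrA a; have [v wv0] := qrA w.
exists w; suff -> : a = v by [].
by rewrite -[a]bm_circ0r -wv0 bm_circA aw0 bm_circ0l.
Qed.

(* For [x = (0, b)], [1 - x = (1, -b)] is inverted on the left by [(1, c)]
   whenever [c o (-b) = 0]. *)
Lemma dorroh_left_unit_subr (x : dorroh A) :
  dorroh_fst x = 0 -> exists u : dorroh A, u * (1 - x) = 1.
Proof.
case: x => [r b] /= ->; have [c cb0] := bm_circ_left_inverse (- b).
exists (1, c); rewrite /GRing.mul /= /dorroh_mul /=; congr pair.
  by rewrite subr0 mulr1.
by rewrite sub0r subr0 bm_lact1 bm_ract1 (addrC (- b)).
Qed.

Lemma dorroh_fst_eq0_jacobson (x : dorroh A) : dorroh_fst x = 0 -> jacobson x.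
Proof.
move=> x0; apply: jacobson_left_quasi_regular => s.
by apply: dorroh_left_unit_subr; rewrite rmorphM /= x0 mulr0.
Qed.

End DorrohExtension.

Theorem proposition2p26 (R : pzRingType) (A : bimodRing R) :
  (forall a : A, exists w : A, a + w + bm_mul a w = 0) ->
  (NJ_symmetric R <-> NJ_symmetric (dorroh A)).
Proof.
move=> qrA; apply: (NJ_symmetric_split (@dorroh_injK R A)).
exact: dorroh_fst_eq0_jacobson.
Qed.
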